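(* Let ${\sf APE}$ be the non-symmetric suboperad of ${\sf T}\mathbb{N}$ generated by $01$. Then the elements of ${\sf APE}$ of arity $n$ are exactly the words $x$ of length $n$ over $\mathbb{N}$ satisfying $x_1=0$ and $1\le x_{i+1}\le x_i+1$ for all $1\le i\le n-1$. Moreover, the elements of ${\sf APE}$ of arity $n$ are in bijection with the rooted plane trees with $n$ nodes. Finally, ${\sf APE}$ is isomorphic (as a non-symmetric operad) to the free non-symmetric operad on one generator of arity two.
   Context: Let $\mathbb{N}$ be the additive monoid of nonnegative integers. ${\sf T}\mathbb{N}=\biguplus_{n\ge1}\mathbb{N}^n$, elements of arity $n$ being words $x=(x_1,\dots,x_n)$ of length $n$ over $\mathbb{N}$ (written without separators, e.g. $01=(0,1)$), with partial compositions $x\circ_i y:=(x_1,\dots,x_{i-1},x_i+y_1,\dots,x_i+y_m,x_{i+1},\dots,x_n)$ for $x$ of arity $n$, $y$ of arity $m$, $1\le i\le n$; it is a non-symmetric set-operad with unit $(0)$. The non-symmetric suboperad generated by a set $S$ is the smallest subset containing $S$ and the unit $(0)$ and closed under all partial compositions $\circ_i$. *)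

From mathcomp Require Import all_boot.
Set Implicit Arguments. Unset Strict Implicit. Unset Printing Implicit Defensive.

(* Elements of T N: nonempty words over nat, represented as seq nat;
   the arity of x is size x. *)

(* Partial composition x \circ_i y (1 <= i <= size x):
   (x_1,...,x_{i-1}, x_i+y_1, ..., x_i+y_m, x_{i+1}, ..., x_n). *)
Definition ocomp (x : seq nat) (i : nat) (y : seq nat) : seq nat :=
  take i.-1 x ++ map (addn (nth 0 x i.-1)) y ++ drop i x.

Definition unitTN : seq nat := [:: 0].

Inductive APE : seq nat -> Prop :=
  | APE_gen  : APE [:: 0; 1]
  | APE_unit : APE unitTN
  | APE_comp x y i : APE x -> APE y -> 1 <= i <= size x -> APE (ocomp x i y).

Inductive ptree : Type := PNode of seq ptree.

Fixpoint pnodes (t : ptree) : nat :=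
  let: PNode ts := t in (sumn (map pnodes ts)).+1.

(* The free non-symmetric operad on one generator of arity two:
   planar binary trees, arity = number of leaves, unit = Leaf,
   generator = Bin Leaf Leaf, partial composition t \circ_i s = grafting
   s on the i-th leaf (from the left) of t. *)
Inductive btree : Type := Leaf | Bin of btree & btree.

Fixpoint leaves (t : btree) : nat :=
  match t with Leaf => 1 | Bin l r => leaves l + leaves r end.

(* graft t k s : replace the leaf of t with 0-based index k by s. *)
Fixpoint graft (t : btree) (k : nat) (s : btree) : btree :=
  match t with
  | Leaf => if k == 0 then s else Leaf
  | Bin l r => if k < leaves l then Bin (graft l k s) r
               else Bin l (graft r (k - leaves l) s)
  end.

Definition bcomp (t : btree) (i : nat) (s : btree) : btree := graft t i.-1 s.

(* A word of APE of arity at least 2 splits uniquely, at its last letter 1,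
   as u ++ map succn v with u and v in APE, and u ++ map succn v is
   (01 o_2 v) o_1 u. Hence APE is freely generated by 01: the binary tree t
   corresponds to the word listing, for each leaf, the number of right edges
   on the path from the root to it. Plane trees with n nodes correspond to
   binary trees with n leaves by the first-child/next-sibling rotation. *)
From Stdlib Require Import ProofIrrelevance ClassicalEpsilon.
From mathcomp Require Import all_boot zify.

Set Implicit Arguments.
Unset Strict Implicit.
Unset Printing Implicit Defensive.

Definition ape_step (a b : nat) : bool := 1 <= b <= a.+1.

Definition ape_word (x : seq nat) : bool :=
  if x is 0 :: rest then path ape_step 0 rest else false.

Lemma ape_word_nth x : 0 < size x ->
  ape_word x <->
  nth 0 x 0 = 0 /\
  (forall i, 1 <= i <= size x - 1 -> 1 <= nth 0 x i <= (nth 0 x i.-1).+1).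
Proof.
case: x => [|[|a] rest] //= _; last by split=> [|[]].
split=> [/(pathP 0) step | [_ step]].
- by split=> // [[|i]] // hi; apply: step; lia.
- by apply/(pathP 0) => i hi; apply: (step i.+1); lia.
Qed.

Lemma ape_path_ge1 a s : path ape_step a s -> all (leq 1) s.
Proof. by elim: s a => //= b s IH a /andP[/andP[-> _] /IH]. Qed.

Lemma ape_path_succ a s : path ape_step a s -> path ape_step a.+1 (map succn s).
Proof.
by rewrite path_map; apply: sub_path => b c; rewrite /relpre /ape_step /=; lia.
Qed.

Lemma ape_path_pred a s : all (leq 2) s ->
  path ape_step a.+1 s -> path ape_step a (map predn s).
Proof.
elim: s a => //= b s IH a /andP[b2 s2] /andP[ab bs].
rewrite IH ?(ltn_predK b2) ?andbT //.
by move: ab; rewrite /ape_step; lia.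
Qed.

Lemma map_succn_predn s : all (leq 1) s -> map succn (map predn s) = s.
Proof. by elim: s => //= b s IH /andP[b1 /IH ->]; rewrite prednK. Qed.

Lemma split_last_notin (T : Type) (a : pred T) (s : seq T) : ~~ all a s ->
  exists p c q, [/\ s = p ++ c :: q, ~~ a c & all a q].
Proof.
elim/last_ind: s => // s c IH; rewrite all_rcons.
case ac: (a c) => /=; last by exists s, c, [::]; rewrite cats1 ac.
move=> sa.
have [p [d [q [-> ad aq]]]] := IH sa.
by exists p, d, (rcons q c); rewrite rcons_cat rcons_cons all_rcons ac.
Qed.

Lemma cat_cons_last_inj (T : eqType) (a : pred T) (c : T) (p p' q q' : seq T) :
  ~~ a c -> all a q -> all a q' -> p ++ c :: q = p' ++ c :: q' -> p = p' /\ q = q'.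
Proof.
move=> nac aq aq'; elim: p p' => [|b p IH] [|b' p'] /=.
- by case.
- by case=> _ E; move: aq; rewrite E all_cat /= (negbTE nac) andbF.
- by case=> _ E; move: aq'; rewrite -E all_cat /= (negbTE nac) andbF.
- by case=> -> /IH [-> ->].
Qed.

Fixpoint word_of_btree (t : btree) : seq nat :=
  if t is Bin l r then word_of_btree l ++ map succn (word_of_btree r) else [:: 0].

Lemma size_word_of_btree t : size (word_of_btree t) = leaves t.
Proof. by elim: t => //= l IHl r IHr; rewrite size_cat size_map IHl IHr. Qed.

Lemma leaves_gt0 t : 0 < leaves t.
Proof. elim: t => //= l hl r hr; lia. Qed.

Lemma ape_word_of_btree t : ape_word (word_of_btree t).
Proof.
elim: t => //= l; case: (word_of_btree l) => [|[|?] u] //= hu r.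
case: (word_of_btree r) => [|[|?] v] //= hv.
by rewrite cat_path hu /= ape_path_succ.
Qed.

Lemma word_of_btree_inj : injective word_of_btree.
Proof.
have size_gt1 l r : 1 < size (word_of_btree (Bin l r)).
  by rewrite size_word_of_btree /=; have := leaves_gt0 l; have := leaves_gt0 r; lia.
elim=> [|l IHl r IHr] [|l' r'] //.
- by move=> /(congr1 size) E; move: (size_gt1 l' r'); rewrite -E.
- by move=> /(congr1 size) E; move: (size_gt1 l r); rewrite E.
have := ape_word_of_btree r; have := ape_word_of_btree r'; rewrite /=.
case Er: (word_of_btree r) => [|[|?] v] //; case Er': (word_of_btree r') => [|[|?] v'] //=.
move=> /ape_path_ge1 v'1 /ape_path_ge1 v1 E.
have shift2 w : all (leq 1) w -> all (leq 2) (map succn w) by rewrite all_map.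
have [/IHl -> /(inj_map succn_inj) Ev] :=
  cat_cons_last_inj (a := leq 2) (c := 1) isT (shift2 _ v1) (shift2 _ v'1) E.
by rewrite (IHr r') // Er Er' Ev.
Qed.

Lemma ape_word_of_btree_surj x : ape_word x -> exists t, word_of_btree t = x.
Proof.
elim: {x}(size x) {-2}x (leqnn (size x)) => [|n IH] [|[|//] rest] //= sz.
case: rest sz => [|b rest] sz apx; first by exists Leaf.
have rest1 := ape_path_ge1 apx.
have [p [c [q [E c1 q2]]]] : exists p c q, [/\ b :: rest = p ++ c :: q, ~~ (1 < c)
    & all (leq 2) q].
  apply: split_last_notin; move: apx => /= /andP[/andP[_ b1] _].
  by rewrite leqNgt ltnS b1.
move: apx rest1; rewrite E cat_path all_cat /= => /andP[pp /andP[pc pq]] /andP[_ /andP[c0 _]].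
have {c1 c0} c_eq1 : c = 1 by lia.
subst c.
have [tl El] : exists t, word_of_btree t = 0 :: p.
  apply: IH; last exact: pp.
  by move: sz; rewrite E size_cat /=; lia.
have [tr Er] : exists t, word_of_btree t = 0 :: map predn q.
  apply: IH; last exact: (ape_path_pred q2 pq).
  by move: sz; rewrite E /= size_cat size_map /=; lia.
exists (Bin tl tr); rewrite /= El Er /= map_succn_predn //.
by apply: sub_all q2 => ? /ltnW.
Qed.

Lemma ocomp_cons a u i y : ocomp (a :: u) i.+2 y = a :: ocomp u i.+1 y.
Proof. by []. Qed.

Lemma ocomp_catl u w k y : k < size u ->
  ocomp (u ++ w) k.+1 y = ocomp u k.+1 y ++ w.
Proof.
elim: u k => // a u IH [|k] /= hk; last by rewrite !ocomp_cons IH.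
by rewrite /ocomp /= !drop0 catA.
Qed.

Lemma ocomp_catr u w k y : size u <= k ->
  ocomp (u ++ w) k.+1 y = u ++ ocomp w (k - size u).+1 y.
Proof.
elim: u k => [|a u IH] [|k] //= hk.
by rewrite ocomp_cons IH.
Qed.

Lemma ocomp_map_succn v k y : k < size v ->
  ocomp (map succn v) k.+1 y = map succn (ocomp v k.+1 y).
Proof.
elim: v k => // a v IH [|k] /= hk; last by rewrite !ocomp_cons IH.
by rewrite /ocomp /= !drop0 map_cat -map_comp.
Qed.

Lemma word_of_graft t k s : k < leaves t ->
  word_of_btree (graft t k s) = ocomp (word_of_btree t) k.+1 (word_of_btree s).
Proof.
elim: t k => [|l IHl r IHr] k /=.
  case: k => // _; rewrite /ocomp /= cats0 -[LHS]map_id.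
  by apply: eq_map => b; rewrite add0n.
move=> hk; case: ifP => [hkl | /negbT]; rewrite /=.
  by rewrite IHl // ocomp_catl ?size_word_of_btree.
rewrite -leqNgt => hlk; have hkr : k - leaves l < leaves r by lia.
by rewrite IHr // ocomp_catr ?size_word_of_btree // ocomp_map_succn ?size_word_of_btree.
Qed.

Lemma word_of_bcomp t s i : 1 <= i <= leaves t ->
  word_of_btree (bcomp t i s) = ocomp (word_of_btree t) i (word_of_btree s).
Proof. by case: i => // i /= hi; rewrite /bcomp word_of_graft. Qed.

Lemma APE_word_of_btree x : APE x <-> exists t, word_of_btree t = x.
Proof.
split.
- elim=> [||y z i _ [t <-] _ [s <-] hi]; first by exists (Bin Leaf Leaf).
    by exists Leaf.
  by exists (bcomp t i s); rewrite word_of_bcomp // -size_word_of_btree.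
- move=> [t <-]; elim: t => [|l APEl r APEr]; first exact: APE_unit.
  pose gr := bcomp (Bin Leaf Leaf) 2 r.
  have grE : word_of_btree gr = ocomp [:: 0; 1] 2 (word_of_btree r).
    by rewrite word_of_bcomp.
  have gr_leaves : 1 <= leaves gr by exact: leaves_gt0.
  have -> : Bin l r = bcomp gr 1 l by [].
  rewrite word_of_bcomp //; apply: APE_comp APEl _.
    by rewrite grE; apply: APE_comp APE_gen APEr _.
  by rewrite size_word_of_btree.
Qed.

Definition btree_of_word (x : seq nat) : btree :=
  epsilon (inhabits Leaf) (fun t => word_of_btree t = x).

Lemma btree_of_wordK x : APE x -> word_of_btree (btree_of_word x) = x.
Proof. by move/APE_word_of_btree; apply: epsilon_spec. Qed.

Lemma word_of_btreeK : cancel word_of_btree btree_of_word.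
Proof.
move=> t; apply: word_of_btree_inj; rewrite btree_of_wordK //.
by apply/APE_word_of_btree; exists t.
Qed.

Fixpoint ptree_of_btree (t : btree) : ptree :=
  if t is Bin l r then
    let: PNode ts := ptree_of_btree r in PNode (ptree_of_btree l :: ts)
  else PNode [::].

Fixpoint btree_of_ptree (t : ptree) : btree :=
  let: PNode ts := t in foldr Bin Leaf (map btree_of_ptree ts).

Lemma ptree_of_btreeK : cancel ptree_of_btree btree_of_ptree.
Proof.
elim=> //= l IHl r IHr; case E: (ptree_of_btree r) => [ts] /=.
by rewrite IHl -[in RHS]IHr E.
Qed.

Lemma btree_of_ptreeK : cancel btree_of_ptree ptree_of_btree.
Proof.
move=> t; elim: {t}(pnodes t) {-2}t (leqnn (pnodes t)) => [|n IH] [ts] //=.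
elim: ts => //= u us IHus sz.
by rewrite IHus ?IH //; lia.
Qed.

Lemma pnodes_ptree_of_btree t : pnodes (ptree_of_btree t) = leaves t.
Proof.
elim: t => //= l IHl r; case: (ptree_of_btree r) => ts /= <-; rewrite IHl; lia.
Qed.

Lemma sig_bijection (A B : Type) (P : A -> Prop) (Q : B -> Prop)
    (f : A -> B) (g : B -> A) :
    (forall a, P a -> Q (f a)) -> (forall b, Q b -> P (g b)) ->
    (forall a, P a -> g (f a) = a) -> (forall b, Q b -> f (g b) = b) ->
  exists (f' : sig P -> sig Q) (g' : sig Q -> sig P), cancel f' g' /\ cancel g' f'.
Proof.
move=> fPQ gQP fK gK.
exists (fun a => exist Q (f (proj1_sig a)) (fPQ _ (proj2_sig a))),
  (fun b => exist P (g (proj1_sig b)) (gQP _ (proj2_sig b))).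
by split=> [[a Pa] | [b Qb]]; apply: subset_eq_compat; [apply: fK | apply: gK].
Qed.

Theorem mainTheorem3 :
  (forall (n : nat) (x : seq nat), 0 < n -> size x = n ->
     (APE x <->
      (nth 0 x 0 = 0 /\
       forall i, 1 <= i <= n - 1 ->
         1 <= nth 0 x i <= (nth 0 x i.-1).+1)))
  /\
  (forall n : nat,
     exists (f : {x : seq nat | APE x /\ size x = n} -> {t : ptree | pnodes t = n})
            (g : {t : ptree | pnodes t = n} -> {x : seq nat | APE x /\ size x = n}),
       cancel f g /\ cancel g f)
  /\
  (exists phi : btree -> seq nat,
     injective phi /\
     (forall x, APE x <-> exists t, phi t = x) /\
     (forall t, size (phi t) = leaves t) /\
     phi Leaf = unitTN /\
     (forall t s i, 1 <= i <= leaves t ->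
        phi (bcomp t i s) = ocomp (phi t) i (phi s))).
Proof.
split; [|split].
- move=> n x n_gt0 size_x; subst n; apply: (iff_trans _ (ape_word_nth n_gt0)).
  split=> [/APE_word_of_btree [t <-] | /ape_word_of_btree_surj /APE_word_of_btree //].
  exact: ape_word_of_btree.
- move=> n; apply: (sig_bijection (f := ptree_of_btree \o btree_of_word)
    (g := word_of_btree \o btree_of_ptree)) => /=.
  + by move=> x [APEx <-]; rewrite pnodes_ptree_of_btree -size_word_of_btree btree_of_wordK.
  + move=> t <-; split; first by apply/APE_word_of_btree; eexists.
    by rewrite size_word_of_btree -pnodes_ptree_of_btree btree_of_ptreeK.
  + by move=> x [APEx _]; rewrite ptree_of_btreeK btree_of_wordK.
  + by move=> t _; rewrite word_of_btreeK btree_of_ptreeK.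
- exists word_of_btree; split; first exact: word_of_btree_inj.
  split; first exact: APE_word_of_btree.
  by split; [exact: size_word_of_btree | split; last exact: word_of_bcomp].
Qed.
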